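(* Let $X$ be a Tychonoff space and $n\in\mathbb N$. Then $C_p(X,\mathbb R^n)$ is strictly H-bounded iff it is H-bounded iff it is strictly M-bounded iff it is M-bounded iff $X$ is pseudocompact. On the other hand, for every nonempty Tychonoff space $X$, $C_p(X,\mathbb R^\omega)$ is not H-bounded.
   Context: $C_p(X,Y)$ for a topological group $Y$ denotes the group of continuous maps $X\to Y$ under pointwise operation with the topology of pointwise convergence; $\mathbb R^\omega$ carries the product topology. For a topological group $G$ with identity $e$: M-bounded means for every sequence $(U_n)$ of neighborhoods of $e$ there are finite $A_n\subset G$ with $G=\bigcup_nA_nU_n$; H-bounded means there are finite $A_n$ with each $x\in G$ in all but finitely many $A_nU_n$. In the game where in round $n$ ONE picks a neighborhood $U_n$ of $e$ and TWO a finite $A_n\subset G$, $G$ is strictly M-bounded (resp. strictly H-bounded) if TWO has a strategy guaranteeing $G=\bigcup_nA_nU_n$ (resp. each $x\in G$ lies in all but finitely many $A_nU_n$). *)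

From Stdlib Require Import Reals List.
Open Scope R_scope.

Record topology (X : Type) := {
  is_open : (X -> Prop) -> Prop;
  open_full : is_open (fun _ => True);
  open_inter : forall U V, is_open U -> is_open V ->
                 is_open (fun x => U x /\ V x);
  open_union : forall F : (X -> Prop) -> Prop,
                 (forall U, F U -> is_open U) ->
                 is_open (fun x => exists U, F U /\ U x)
}.
Arguments is_open {X} t U.

Definition R_open (W : R -> Prop) : Prop :=
  forall p, W p -> exists eps, 0 < eps /\ forall q, Rabs (q - p) < eps -> W q.

Definition prod_open {I : Type} (W : (I -> R) -> Prop) : Prop :=
  forall p, W p -> exists (l : list I) (eps : R), 0 < eps /\
    forall q, (forall i, In i l -> Rabs (q i - p i) < eps) -> W q.

Definition continuous_R {X : Type} (T : topology X) (f : X -> R) : Prop :=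
  forall W, R_open W -> is_open T (fun x => W (f x)).

Definition continuous_prod {X I : Type} (T : topology X) (f : X -> I -> R) : Prop :=
  forall W, prod_open W -> is_open T (fun x => W (f x)).

Definition closed {X : Type} (T : topology X) (F : X -> Prop) : Prop :=
  is_open T (fun x => ~ F x).

Definition T1 {X : Type} (T : topology X) : Prop :=
  forall x : X, closed T (fun y => y = x).

Definition completely_regular {X : Type} (T : topology X) : Prop :=
  forall (F : X -> Prop) (x : X), closed T F -> ~ F x ->
    exists f : X -> R, continuous_R T f /\ f x = 0 /\
      (forall y, F y -> f y = 1) /\ (forall y, 0 <= f y <= 1).

Definition tychonoff {X : Type} (T : topology X) : Prop :=
  T1 T /\ completely_regular T.

Definition pseudocompact {X : Type} (T : topology X) : Prop :=
  forall f : X -> R, continuous_R T f -> exists M, forall x, Rabs (f x) <= M.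

(** * The group C_p(X, R^I)
    Elements: continuous maps X -> R^I (represented as X -> I -> R), with
    pointwise addition; identity = the zero map; topology of pointwise
    convergence. *)
Section Cp.
Context {X I : Type} (T : topology X).

Definition Cp (f : X -> I -> R) : Prop := continuous_prod T f.

Definition Cp_zero : X -> I -> R := fun _ _ => 0.

(** U is a neighbourhood of the identity in C_p(X,R^I): U is a subset of
    C_p(X,R^I) containing a finite intersection of subbasic open sets
    {g | g x_j \in V_j} (V_j open in R^I) which contains the zero map. *)
Definition Cp_nbhd0 (U : (X -> I -> R) -> Prop) : Prop :=
  (forall g, U g -> Cp g) /\
  exists l : list (X * ((I -> R) -> Prop)),
    (forall p, In p l -> prod_open (snd p) /\ snd p (Cp_zero (fst p))) /\
    forall g, Cp g -> (forall p, In p l -> snd p (g (fst p))) -> U g.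

Definition in_prod_set (A : list (X -> I -> R)) (U : (X -> I -> R) -> Prop)
  (x : X -> I -> R) : Prop :=
  exists a u, In a A /\ U u /\ x = (fun t i => a t i + u t i).

Definition finite_subset (A : list (X -> I -> R)) : Prop :=
  forall a, In a A -> Cp a.

Definition M_bounded : Prop :=
  forall U : nat -> (X -> I -> R) -> Prop, (forall n, Cp_nbhd0 (U n)) ->
  exists A : nat -> list (X -> I -> R), (forall n, finite_subset (A n)) /\
    forall x, Cp x -> exists n, in_prod_set (A n) (U n) x.

Definition H_bounded : Prop :=
  forall U : nat -> (X -> I -> R) -> Prop, (forall n, Cp_nbhd0 (U n)) ->
  exists A : nat -> list (X -> I -> R), (forall n, finite_subset (A n)) /\
    forall x, Cp x -> exists N, forall n, (N <= n)%nat -> in_prod_set (A n) (U n) x.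

(** Strategies for TWO: the move A_n is a function of ONE's moves
    U_0, ..., U_n (TWO's own earlier moves are determined by these). *)
Definition history (U : nat -> (X -> I -> R) -> Prop) (n : nat) :=
  map U (seq 0 (S n)).

Definition strictly_M_bounded : Prop :=
  exists sigma : list ((X -> I -> R) -> Prop) -> list (X -> I -> R),
  forall U : nat -> (X -> I -> R) -> Prop, (forall n, Cp_nbhd0 (U n)) ->
    (forall n, finite_subset (sigma (history U n))) /\
    forall x, Cp x -> exists n, in_prod_set (sigma (history U n)) (U n) x.

Definition strictly_H_bounded : Prop :=
  exists sigma : list ((X -> I -> R) -> Prop) -> list (X -> I -> R),
  forall U : nat -> (X -> I -> R) -> Prop, (forall n, Cp_nbhd0 (U n)) ->
    (forall n, finite_subset (sigma (history U n))) /\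
    forall x, Cp x -> exists N, forall n, (N <= n)%nat ->
      in_prod_set (sigma (history U n)) (U n) x.
End Cp.

(** Index types: R^n uses {k | k < n}, R^omega uses nat. *)
Definition fin (n : nat) : Type := {k : nat | (k < n)%nat}.

(* (1) If X is pseudocompact, every f in C_p(X,R^n) is bounded.  A neighbourhood
   of 0 contains a box {g | |g x i| < d for (x,i) in P} with P finite, and
   bump functions from complete regularity give finitely many continuous maps
   d-approximating on P every function bounded by N.  Answering U_m with such
   a set for N = m+1 is a winning strategy for TWO in the H-game.
   (2) If f is continuous and unbounded, pick x_k with |f x_k| >= k and let
   U_k = {u | |u x_k i0| < 1}.  Whatever finite sets A_k TWO chooses, a
   locally finite sum of tents composed with |f| gives a continuous h with
   |h x_k i0| >= 1 + max_{a in A_k} |a x_k i0|, so h is in no A_k U_k.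
   (3) For R^omega the coordinate m plays the role of the point x_k: the
   constant map with m-th coordinate 1 + max_{a in A_m} |a x0 m| escapes
   every A_m U_m. *)
From Stdlib Require Import Reals List Lra Lia ZArith.
From Stdlib Require Import Classical ClassicalEpsilon FunctionalExtensionality
  PropExtensionality ProofIrrelevance.
Open Scope R_scope.

Definition max_abs (l : list R) : R := fold_right (fun v m => Rmax (Rabs v) m) 0 l.

Lemma max_abs_ge0 l : 0 <= max_abs l.
Proof.
  induction l as [|v l IH]; simpl; [lra|].
  eapply Rle_trans; [exact IH | apply Rmax_r].
Qed.

Lemma max_abs_ge l v : In v l -> Rabs v <= max_abs l.
Proof.
  induction l as [|w l IH]; [intros []|].
  intros [<-|Hv]; simpl; [apply Rmax_l|].
  eapply Rle_trans; [apply IH; auto | apply Rmax_r].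
Qed.

Lemma nat_grid_near (d : R) (K : nat) : 0 < d -> forall r, 0 <= r <= INR K * d ->
  exists k, (k <= K)%nat /\ Rabs (r - INR k * d) < d.
Proof.
  intros Hd. induction K as [|K IH]; intros r Hr.
  - exists 0%nat. split; [lia|]. simpl in *.
    replace (r - 0 * d) with 0 by lra. rewrite Rabs_R0; lra.
  - destruct (Rle_dec r (INR K * d)).
    + destruct (IH r) as [k [Hk Hr']]; [lra|]. exists k; split; [lia | exact Hr'].
    + exists (S K). split; [lia|]. rewrite S_INR in *. apply Rabs_def1; nra.
Qed.

Lemma finite_net (N d : R) : 0 < d ->
  exists G, forall r, Rabs r <= N -> exists c, In c G /\ Rabs (r - c) < d.
Proof.
  intros Hd. destruct (INR_unbounded (2 * N / d)) as [K HK].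
  exists (map (fun k => - N + INR k * d) (seq 0 (S K))).
  intros r Hr. pose proof (Rle_abs r). pose proof (Rle_abs (- r)). rewrite Rabs_Ropp in *.
  assert (HKd : 2 * N <= INR K * d).
  { apply (Rmult_lt_compat_r d) in HK; [|exact Hd].
    unfold Rdiv in HK. rewrite Rmult_assoc, Rinv_l in HK; lra. }
  destruct (nat_grid_near d K Hd (r + N)) as [k [Hk Hrk]]; [lra|].
  exists (- N + INR k * d). split.
  - apply in_map_iff. exists k. split; [reflexivity|]. apply in_seq. lia.
  - replace (r - (- N + INR k * d)) with (r + N - INR k * d) by ring. exact Hrk.
Qed.

Lemma R_open_ball c eps : R_open (fun q => Rabs (q - c) < eps).
Proof.
  intros p Hp. exists (eps - Rabs (p - c)). split; [lra|].
  intros q Hq. pose proof (Rabs_triang (q - p) (p - c)) as H.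
  replace (q - p + (p - c)) with (q - c) in H by ring. lra.
Qed.

Lemma prod_open_ball {J : Type} (i : J) c eps :
  prod_open (fun q : J -> R => Rabs (q i - c) < eps).
Proof.
  intros p Hp. destruct (R_open_ball c eps (p i) Hp) as [d [Hd Hball]].
  exists (i :: nil), d. split; [exact Hd|].
  intros q Hq. apply Hball, Hq. left; reflexivity.
Qed.

Section Continuity.
Context {X : Type} (T : topology X).

Lemma open_ext (U V : X -> Prop) : is_open T U -> (forall y, U y <-> V y) -> is_open T V.
Proof.
  intros HU H. replace V with U; [exact HU|].
  apply functional_extensionality; intro y; apply propositional_extensionality, H.
Qed.

Lemma open_of_local (S : X -> Prop) :
  (forall x, S x -> exists U, is_open T U /\ U x /\ forall y, U y -> S y) -> is_open T S.
Proof.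
  intros H.
  apply (open_ext _ _ (open_union _ T (fun U => is_open T U /\ forall y, U y -> S y)
                        (fun U HU => proj1 HU))).
  intro y; split.
  - intros [U [[_ HU] Uy]]; auto.
  - intros Sy. destruct (H y Sy) as [U [HU [Uy HUS]]]. exists U; auto.
Qed.

Definition cont_eps (f : X -> R) : Prop :=
  forall x eps, 0 < eps ->
    exists U, is_open T U /\ U x /\ forall y, U y -> Rabs (f y - f x) < eps.

Lemma continuous_R_cont_eps f : continuous_R T f <-> cont_eps f.
Proof.
  split.
  - intros Hf x eps Heps. exists (fun y => Rabs (f y - f x) < eps).
    split; [apply (Hf _ (R_open_ball (f x) eps))|].
    split; [rewrite Rminus_diag, Rabs_R0; exact Heps | auto].
  - intros Hf W HW. apply open_of_local. intros x Hx.
    destruct (HW _ Hx) as [eps [Heps HWe]].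
    destruct (Hf x eps Heps) as [U [HU [Ux HUy]]].
    exists U; auto.
Qed.

Lemma cont_eps_coords {J : Type} (g : X -> J -> R) (l : list J) x eps :
  0 < eps -> (forall i, cont_eps (fun y => g y i)) ->
  exists U, is_open T U /\ U x /\
    forall y, U y -> forall i, In i l -> Rabs (g y i - g x i) < eps.
Proof.
  intros Heps Hg. induction l as [|i l IH].
  - exists (fun _ => True). split; [apply open_full|]. split; [trivial|]. intros y _ i [].
  - destruct IH as [U [HU [Ux HUy]]].
    destruct (Hg i x eps Heps) as [V [HV [Vx HVy]]].
    exists (fun y => V y /\ U y). split; [apply open_inter; auto|].
    split; [auto|]. intros y [Vy Uy] j [<-|Hj]; auto.
Qed.

Lemma Cp_coordsP {J : Type} (g : X -> J -> R) :
  Cp T g <-> forall i, cont_eps (fun y => g y i).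
Proof.
  split.
  - intros Hg i x eps Heps. exists (fun y => Rabs (g y i - g x i) < eps).
    split; [apply (Hg _ (prod_open_ball i (g x i) eps))|].
    split; [rewrite Rminus_diag, Rabs_R0; exact Heps | auto].
  - intros Hg W HW. apply open_of_local. intros x Hx.
    destruct (HW _ Hx) as [l [eps [Heps HWe]]].
    destruct (cont_eps_coords g l x eps Heps Hg) as [U [HU [Ux HUy]]].
    exists U; auto.
Qed.

Lemma cont_eps_ext f g : cont_eps f -> (forall y, f y = g y) -> cont_eps g.
Proof.
  intros Hf H. replace g with f; [exact Hf|]. apply functional_extensionality, H.
Qed.

Lemma cont_eps_local h :
  (forall x, exists U g, is_open T U /\ U x /\ cont_eps g /\ forall y, U y -> h y = g y) ->
  cont_eps h.
Proof.
  intros H x eps Heps. destruct (H x) as [U [g [HU [Ux [Hg Hhg]]]]].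
  destruct (Hg x eps Heps) as [V [HV [Vx HVy]]].
  exists (fun y => U y /\ V y). split; [apply open_inter; auto|]. split; [auto|].
  intros y [Uy Vy]. rewrite (Hhg y Uy), (Hhg x Ux). auto.
Qed.

Lemma cont_eps_const c : cont_eps (fun _ => c).
Proof.
  intros x eps Heps. exists (fun _ => True). split; [apply open_full|].
  split; [trivial|]. intros; rewrite Rminus_diag, Rabs_R0; exact Heps.
Qed.

Lemma cont_eps_add f g : cont_eps f -> cont_eps g -> cont_eps (fun y => f y + g y).
Proof.
  intros Hf Hg x eps Heps.
  destruct (Hf x (eps / 2)) as [U [HU [Ux HUy]]]; [lra|].
  destruct (Hg x (eps / 2)) as [V [HV [Vx HVy]]]; [lra|].
  exists (fun y => U y /\ V y). split; [apply open_inter; auto|]. split; [auto|].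
  intros y [Uy Vy]. specialize (HUy y Uy). specialize (HVy y Vy).
  pose proof (Rabs_triang (f y - f x) (g y - g x)).
  replace (f y + g y - (f x + g x)) with (f y - f x + (g y - g x)) by ring. lra.
Qed.

Lemma cont_eps_scal c f : cont_eps f -> cont_eps (fun y => c * f y).
Proof.
  intros Hf x eps Heps. set (a := Rabs c). assert (Ha : 0 <= a) by apply Rabs_pos.
  destruct (Hf x (eps / (a + 1))) as [U [HU [Ux HUy]]]; [apply Rdiv_lt_0_compat; lra|].
  exists U. split; [exact HU|]. split; [exact Ux|]. intros y Uy.
  replace (c * f y - c * f x) with (c * (f y - f x)) by ring. rewrite Rabs_mult.
  apply Rle_lt_trans with (a * (eps / (a + 1))).
  - apply Rmult_le_compat_l; [exact Ha | apply Rlt_le, HUy, Uy].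
  - apply (Rmult_lt_reg_r (a + 1)); [lra|].
    replace (a * (eps / (a + 1)) * (a + 1)) with (a * eps) by (field; lra). nra.
Qed.

Lemma cont_eps_sub f g : cont_eps f -> cont_eps g -> cont_eps (fun y => f y - g y).
Proof.
  intros Hf Hg. apply (cont_eps_ext (fun y => f y + (-1) * g y)).
  - apply cont_eps_add, cont_eps_scal; assumption.
  - intro; ring.
Qed.

Lemma cont_eps_abs f : cont_eps f -> cont_eps (fun y => Rabs (f y)).
Proof.
  intros Hf x eps Heps. destruct (Hf x eps Heps) as [U [HU [Ux HUy]]].
  exists U; split; [exact HU|]; split; [exact Ux|]. intros y Uy.
  eapply Rle_lt_trans; [apply Rabs_triang_inv2 | auto].
Qed.

Lemma cont_eps_max0 f : cont_eps f -> cont_eps (fun y => Rmax 0 (f y)).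
Proof.
  intros Hf. apply (cont_eps_ext (fun y => / 2 * (f y + Rabs (f y)))).
  - apply cont_eps_scal, cont_eps_add, cont_eps_abs; assumption.
  - intro y. unfold Rmax. destruct (Rle_dec 0 (f y)).
    + rewrite Rabs_right; lra.
    + rewrite Rabs_left; lra.
Qed.

End Continuity.

Section Bounded.
Context {X : Type} (T : topology X).

Lemma closed_finite_minus_point (HT1 : T1 T) x (Q : list X) :
  closed T (fun y => In y Q /\ y <> x).
Proof.
  unfold closed. induction Q as [|q Q IH].
  - apply (open_ext T (fun _ => True)); [apply open_full|].
    intro y; split; [intros _ [[] _] | auto].
  - destruct (classic (q = x)) as [Hq|Hq].
    + apply (open_ext T _ _ IH). intro y. simpl. split.
      * intros H [[Hy|Hy] Hyx]; [congruence | apply H; auto].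
      * intros H [Hy Hyx]. apply H; auto.
    + apply (open_ext T (fun y => ~ y = q /\ ~ (In y Q /\ y <> x))).
      * apply open_inter; [apply (HT1 q) | exact IH].
      * intro y; simpl; split.
        -- intros [H1 H2] [[Hy|Hy] Hyx]; [congruence | apply H2; auto].
        -- intros H; split; [intros ->; apply H; auto | intros [Hy Hyx]; apply H; auto].
Qed.

Lemma bump_function (HT : tychonoff T) x (Q : list X) :
  exists psi, cont_eps T psi /\ psi x = 1 /\ forall y, In y Q -> y <> x -> psi y = 0.
Proof.
  destruct HT as [HT1 HCR].
  destruct (HCR _ x (closed_finite_minus_point HT1 x Q)) as [f [Hf [Hfx [HF _]]]].
  { intros [_ H]; auto. }
  exists (fun y => 1 - f y). split; [|split].
  - apply cont_eps_sub; [apply cont_eps_const | apply continuous_R_cont_eps, Hf].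
  - rewrite Hfx; ring.
  - intros y Hy Hyx. rewrite HF; [ring | auto].
Qed.

Lemma Cp_bump {J : Type} (HT : tychonoff T) (x : X) (i : J) (P : list (X * J)) :
  ~ In (x, i) P ->
  exists Phi : X -> J -> R, Cp T Phi /\ Phi x i = 1 /\
    forall p, In p P -> Phi (fst p) (snd p) = 0.
Proof.
  intros Hn. destruct (bump_function HT x (map fst P)) as [psi [Hpsi [Hx H0]]].
  exists (fun y j => if excluded_middle_informative (j = i) then psi y else 0).
  split; [|split].
  - apply Cp_coordsP. intro j.
    destruct (excluded_middle_informative (j = i)); [exact Hpsi | apply cont_eps_const].
  - destruct (excluded_middle_informative (i = i)); [exact Hx | congruence].
  - intros [y j] Hp. simpl. destruct (excluded_middle_informative (j = i)) as [->|]; auto.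
    apply H0; [exact (in_map fst _ _ Hp) | intros ->; auto].
Qed.

Definition net_on {J : Type} (d N : R) (P : list (X * J)) (A : list (X -> J -> R)) : Prop :=
  finite_subset T A /\
  forall v : X -> J -> R, (forall p, In p P -> Rabs (v (fst p) (snd p)) <= N) ->
    exists a, In a A /\ forall p, In p P -> Rabs (a (fst p) (snd p) - v (fst p) (snd p)) < d.

Lemma net_on_cons {J : Type} (HT : tychonoff T) d N x (i : J) P A :
  0 < d -> ~ In (x, i) P -> net_on d N P A -> exists A', net_on d N ((x, i) :: P) A'.
Proof.
  intros Hd Hin [HA HAv].
  destruct (Cp_bump HT x i P Hin) as [Phi [HPhi [HPx HP0]]].
  set (B := max_abs (map (fun a : X -> J -> R => a x i) A)).
  destruct (finite_net (N + B) d Hd) as [G HG].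
  (* correct the approximant at (x, i) by a multiple of a bump vanishing on P *)
  exists (flat_map (fun a => map (fun c y j => a y j + c * Phi y j) G) A). split.
  - intros a' Ha'. apply in_flat_map in Ha' as [a [Ha Hc]].
    apply in_map_iff in Hc as [c [<- Hc]].
    apply Cp_coordsP. intro j. apply cont_eps_add.
    + apply Cp_coordsP, HA, Ha.
    + apply cont_eps_scal. apply Cp_coordsP, HPhi.
  - intros v Hv. destruct (HAv v) as [a [Ha Hap]].
    { intros p Hp; apply Hv; right; exact Hp. }
    destruct (HG (v x i - a x i)) as [c [Hc Hrc]].
    { pose proof (Hv (x, i) (or_introl eq_refl)) as Hvx; simpl in Hvx.
      pose proof (max_abs_ge _ _ (in_map (fun a : X -> J -> R => a x i) _ _ Ha)) as Hax.
      pose proof (Rabs_triang (v x i) (- a x i)) as Htri. rewrite Rabs_Ropp in Htri.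
      fold B in Hax. unfold Rminus. lra. }
    exists (fun y j => a y j + c * Phi y j). split.
    + apply in_flat_map. exists a. split; [exact Ha|]. apply in_map_iff. exists c; auto.
    + intros p [<-|Hp]; simpl.
      * rewrite HPx. replace (a x i + c * 1 - v x i) with (- (v x i - a x i - c)) by ring.
        rewrite Rabs_Ropp. exact Hrc.
      * rewrite (HP0 p Hp), Rmult_0_r, Rplus_0_r. apply Hap, Hp.
Qed.

Lemma net_on_exists {J : Type} (HT : tychonoff T) d N (P : list (X * J)) :
  0 < d -> exists A, net_on d N P A.
Proof.
  intros Hd. induction P as [|[x i] P [A HA]].
  - exists (Cp_zero :: nil). split.
    + intros a [<-|[]]. apply Cp_coordsP; intro; apply (cont_eps_const T 0).
    + intros v _. exists Cp_zero. split; [left; reflexivity | intros _ []].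
  - destruct (classic (In (x, i) P)) as [Hin|Hin].
    + exists A. destruct HA as [HA HAv]. split; [exact HA|].
      intros v Hv. destruct (HAv v) as [a [Ha Hap]].
      { intros p Hp; apply Hv; right; exact Hp. }
      exists a; split; [exact Ha|]. intros p [<-|Hp]; [apply (Hap _ Hin) | auto].
    + exact (net_on_cons HT d N x i P A Hd Hin HA).
Qed.

Lemma subbasic_box {J : Type} (l : list (X * ((J -> R) -> Prop))) :
  (forall p, In p l -> prod_open (snd p) /\ snd p (Cp_zero (fst p))) ->
  exists (P : list (X * J)) (d : R), 0 < d /\
    forall g : X -> J -> R, (forall q, In q P -> Rabs (g (fst q) (snd q)) < d) ->
      forall p, In p l -> snd p (g (fst p)).
Proof.
  induction l as [|[x V] l IH]; intros Hl.
  - exists nil, 1. split; [lra|]. intros g _ p [].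
  - destruct IH as [P [d [Hd HP]]]. { intros p Hp; apply Hl; right; exact Hp. }
    destruct (Hl (x, V) (or_introl eq_refl)) as [HV HV0]. simpl in HV, HV0.
    destruct (HV _ HV0) as [li [e [He HVe]]].
    exists (map (fun i => (x, i)) li ++ P), (Rmin e d). split; [apply Rmin_pos; auto|].
    intros g Hg p [<-|Hp].
    + simpl. apply HVe. intros i Hi. unfold Cp_zero. rewrite Rminus_0_r.
      eapply Rlt_le_trans; [apply (Hg (x, i)) | apply Rmin_l].
      apply in_or_app; left. apply in_map_iff. exists i; auto.
    + apply HP; [|exact Hp]. intros q Hq.
      eapply Rlt_le_trans; [apply Hg | apply Rmin_r]. apply in_or_app; right; exact Hq.
Qed.

Definition covers_bounded {J : Type} (U : (X -> J -> R) -> Prop) (N : R)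
  (A : list (X -> J -> R)) : Prop :=
  finite_subset T A /\
  forall f, Cp T f -> (forall x i, Rabs (f x i) <= N) -> in_prod_set A U f.

Lemma covers_bounded_exists {J : Type} (HT : tychonoff T) (U : (X -> J -> R) -> Prop) N :
  Cp_nbhd0 T U -> exists A, covers_bounded U N A.
Proof.
  intros [HU [l [Hl Hlu]]].
  destruct (subbasic_box l Hl) as [P [d [Hd HPd]]].
  destruct (net_on_exists HT d N P Hd) as [A [HA HAv]].
  exists A. split; [exact HA|].
  intros f Hf Hb. destruct (HAv f) as [a [Ha Hap]]. { intros p _; apply Hb. }
  exists a, (fun t i => f t i - a t i). split; [exact Ha|]. split.
  - apply Hlu.
    + apply Cp_coordsP. intro i.
      apply cont_eps_sub; apply Cp_coordsP; [exact Hf | exact (HA a Ha)].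
    + apply (HPd (fun t i => f t i - a t i)). intros q Hq. cbv beta.
      rewrite Rabs_minus_sym. apply Hap, Hq.
  - apply functional_extensionality; intro t; apply functional_extensionality; intro i; ring.
Qed.

Lemma strictly_H_bounded_of_bounded {J : Type} (HT : tychonoff T) :
  (forall f : X -> J -> R, Cp T f -> exists M, forall x i, Rabs (f x i) <= M) ->
  @strictly_H_bounded X J T.
Proof.
  intros Hbd.
  exists (fun h => epsilon (inhabits nil)
                    (covers_bounded (last h (fun _ => True)) (INR (length h)))).
  intros U HU.
  (* the last entry of [history U m] is [U m], and it has length m+1 *)
  assert (Hcov : forall m, covers_bounded (U m) (INR (S m)) (epsilon (inhabits nil)
     (covers_bounded (last (history U m) (fun _ => True)) (INR (length (history U m)))))).
  { intro m. unfold history. rewrite length_map, length_seq, seq_S, map_app. simpl.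
    rewrite last_last. apply epsilon_spec, covers_bounded_exists; auto. }
  split; [intro m; apply Hcov|].
  intros f Hf. destruct (Hbd f Hf) as [M HM].
  destruct (INR_unbounded M) as [N0 HN0].
  exists N0. intros m Hm. apply (Hcov m); [exact Hf|].
  intros x i. eapply Rle_trans; [apply HM|].
  assert (INR N0 <= INR (S m)) by (apply le_INR; lia). lra.
Qed.

Lemma pseudocompact_Cp_bounded n : pseudocompact T ->
  forall f : X -> fin n -> R, Cp T f -> exists M, forall x i, Rabs (f x i) <= M.
Proof.
  intros Hpc f Hf.
  assert (H : forall k, exists M, forall x (i : fin n), (proj1_sig i < k)%nat -> Rabs (f x i) <= M).
  { induction k as [|k [M HM]].
    - exists 0. intros x i Hi; lia.
    - destruct (Compare_dec.lt_dec k n) as [Hk|Hk].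
      + destruct (Hpc (fun y => f y (exist _ k Hk))) as [Mk HMk].
        { apply continuous_R_cont_eps. apply Cp_coordsP, Hf. }
        exists (Rmax M Mk). intros x [j Hj] Hjk. simpl in Hjk.
        destruct (Nat.eq_dec j k) as [->|Hne].
        * rewrite (proof_irrelevance _ Hj Hk). eapply Rle_trans; [apply HMk | apply Rmax_r].
        * eapply Rle_trans; [apply (HM x (exist _ j Hj)); simpl; lia | apply Rmax_l].
      + exists M. intros x [j Hj] Hjk. apply (HM x (exist _ j Hj)). simpl in *; lia. }
  destruct (H n) as [M HM]. exists M. intros x [j Hj]. apply HM. exact Hj.
Qed.

End Bounded.

Section Escape.
Context {X J : Type} (T : topology X).

Definition eval_unit_ball (x0 : X) (i0 : J) : (X -> J -> R) -> Prop :=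
  fun u => Cp T u /\ Rabs (u x0 i0) < 1.

Lemma eval_unit_ball_nbhd0 (x0 : X) (i0 : J) : Cp_nbhd0 T (eval_unit_ball x0 i0).
Proof.
  split; [intros g [Hg _]; exact Hg|].
  exists ((x0, fun q : J -> R => Rabs (q i0 - 0) < 1) :: nil). split.
  - intros p [<-|[]]. split; [apply prod_open_ball|].
    simpl. unfold Cp_zero. rewrite Rminus_0_r, Rabs_R0; lra.
  - intros g Hg Hp. split; [exact Hg|].
    rewrite <- (Rminus_0_r (g x0 i0)). apply (Hp _ (or_introl eq_refl)).
Qed.

Lemma not_in_prod_set_eval_unit_ball (A : list (X -> J -> R)) x0 i0 h :
  1 + max_abs (map (fun a => a x0 i0) A) <= Rabs (h x0 i0) ->
  ~ in_prod_set A (eval_unit_ball x0 i0) h.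
Proof.
  intros Hb [a [u [Ha [[_ Hu] ->]]]]. cbv beta in Hb.
  pose proof (max_abs_ge _ _ (in_map (fun a => a x0 i0) _ _ Ha)).
  pose proof (Rabs_triang (a x0 i0) (u x0 i0)). lra.
Qed.

End Escape.

Lemma not_H_bounded_omega {X : Type} (T : topology X) (x0 : X) : ~ @H_bounded X nat T.
Proof.
  intros HH. destruct (HH (eval_unit_ball T x0) (eval_unit_ball_nbhd0 T x0)) as [A [_ HAx]].
  set (h := fun (_ : X) (m : nat) => 1 + max_abs (map (fun a => a x0 m) (A m))).
  destruct (HAx h) as [N HN].
  - apply Cp_coordsP. intro m. unfold h. apply cont_eps_const.
  - apply (not_in_prod_set_eval_unit_ball T (A N) x0 N h); [| apply HN; lia].
    apply Rle_abs.
Qed.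

Section Dominating.
Variables t r : nat -> R.
Hypothesis t_ge : forall k, INR k <= t k.
Hypothesis r_ge0 : forall k, 0 <= r k.

Definition tent (u : R) : R := Rmax 0 (1 - Rabs u).

Fixpoint tent_sum (K : nat) (s : R) : R :=
  match K with
  | O => 0
  | S K => tent_sum K s + r K * tent (s - t K)
  end.

Lemma tent_sum_stable K1 K2 s : s + 1 <= INR K1 -> (K1 <= K2)%nat ->
  tent_sum K2 s = tent_sum K1 s.
Proof.
  intros HK1 HK. induction HK as [|K2 HK IH]; [reflexivity|].
  simpl. rewrite IH.
  assert (Hfar : 1 - Rabs (s - t K2) <= 0).
  { pose proof (le_INR _ _ HK). pose proof (t_ge K2).
    pose proof (Rle_abs (- (s - t K2))). rewrite Rabs_Ropp in *. lra. }
  unfold tent. rewrite Rmax_left by exact Hfar. ring.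
Qed.

Lemma tent_sum_ge K s k : (k < K)%nat -> r k * tent (s - t k) <= tent_sum K s.
Proof.
  assert (Hterm : forall j, 0 <= r j * tent (s - t j)).
  { intro j. apply Rmult_le_pos; [apply r_ge0 | apply Rmax_l]. }
  induction K as [|K IH]; intros Hk; [lia|]. simpl.
  assert (0 <= tent_sum K s).
  { clear IH Hk. induction K as [|K IH]; simpl; [lra|]. pose proof (Hterm K). lra. }
  destruct (Nat.eq_dec k K) as [->|Hne]; [lra|].
  pose proof (IH ltac:(lia)). pose proof (Hterm K). lra.
Qed.

Definition nat_above (s : R) : nat := S (Z.to_nat (up s)).

Lemma nat_above_gt s : s + 1 < INR (nat_above s).
Proof.
  unfold nat_above. rewrite S_INR. apply Rplus_lt_compat_r.
  destruct (archimed s) as [Hup _].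
  destruct (Z_le_gt_dec 0 (up s)) as [Hpos|Hneg].
  - rewrite INR_IZR_INZ, Z2Nat.id by exact Hpos. exact Hup.
  - replace (Z.to_nat (up s)) with 0%nat by lia. apply Z.gt_lt, IZR_lt in Hneg. simpl. lra.
Qed.

(* Truncating at [nat_above s] loses nothing: the tents with [k >= s + 1] vanish
   at [s] because [t k >= k]. *)
Definition dominating (s : R) : R := tent_sum (nat_above s) s.

Lemma dominating_tent_sum K s : s + 1 <= INR K -> dominating s = tent_sum K s.
Proof.
  intros HK. pose proof (nat_above_gt s). unfold dominating.
  destruct (Nat.le_ge_cases K (nat_above s)).
  - apply tent_sum_stable; assumption.
  - symmetry. apply tent_sum_stable; [lra | assumption].
Qed.

Lemma dominating_ge k : r k <= dominating (t k).
Proof.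
  assert (Hk : (k < nat_above (t k))%nat).
  { apply INR_lt. pose proof (t_ge k). pose proof (nat_above_gt (t k)). lra. }
  pose proof (tent_sum_ge _ (t k) k Hk) as H.
  unfold tent in H. rewrite Rminus_diag, Rabs_R0, Rmax_right in H by lra.
  unfold dominating. lra.
Qed.

Lemma cont_eps_tent_sum {X : Type} (T : topology X) K g :
  cont_eps T g -> cont_eps T (fun x => tent_sum K (g x)).
Proof.
  intros Hg. induction K as [|K IH]; simpl; [apply cont_eps_const|].
  apply cont_eps_add; [exact IH|]. apply cont_eps_scal, cont_eps_max0.
  apply cont_eps_sub; [apply cont_eps_const|]. apply cont_eps_abs.
  apply cont_eps_sub; [exact Hg | apply cont_eps_const].
Qed.

Lemma cont_eps_dominating {X : Type} (T : topology X) g :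
  cont_eps T g -> cont_eps T (fun x => dominating (g x)).
Proof.
  intros Hg. apply cont_eps_local. intros x.
  destruct (Hg x 1 Rlt_0_1) as [U [HU [Ux HUy]]].
  exists U, (fun y => tent_sum (nat_above (g x + 1)) (g y)).
  split; [exact HU|]. split; [exact Ux|]. split; [apply cont_eps_tent_sum, Hg|].
  intros y Uy. apply dominating_tent_sum.
  pose proof (nat_above_gt (g x + 1)). pose proof (HUy y Uy).
  pose proof (Rle_abs (g y - g x)). lra.
Qed.

End Dominating.

Lemma M_bounded_pseudocompact {X J : Type} (T : topology X) (i0 : J) :
  @M_bounded X J T -> pseudocompact T.
Proof.
  intros HM f Hf. apply NNPP. intro Hnb.
  assert (Hfar : forall k : nat, exists x, INR k <= Rabs (f x)).
  { intro k. apply NNPP. intro Hk. apply Hnb. exists (INR k). intro x.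
    apply Rnot_lt_le. intro Hx. apply Hk. exists x. lra. }
  destruct (choice _ Hfar) as [xs Hxs].
  destruct (HM (fun k => eval_unit_ball T (xs k) i0)
                (fun k => eval_unit_ball_nbhd0 T (xs k) i0)) as [A [_ HAx]].
  set (r := fun k => 1 + max_abs (map (fun a => a (xs k) i0) (A k))).
  assert (Hr : forall k, 0 <= r k).
  { intro k. pose proof (max_abs_ge0 (map (fun a => a (xs k) i0) (A k))). unfold r. lra. }
  set (h := fun x (_ : J) => dominating (fun k => Rabs (f (xs k))) r (Rabs (f x))).
  destruct (HAx h) as [k Hk].
  - apply Cp_coordsP. intro i. apply cont_eps_dominating; [exact Hxs|].
    apply cont_eps_abs, continuous_R_cont_eps, Hf.
  - apply (not_in_prod_set_eval_unit_ball T (A k) (xs k) i0 h); [|exact Hk].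
    eapply Rle_trans; [|apply Rle_abs].
    exact (dominating_ge _ r Hxs Hr k).
Qed.

Section Games.
Context {X I : Type} (T : topology X).

Lemma strictly_H_bounded_H_bounded : @strictly_H_bounded X I T -> @H_bounded X I T.
Proof.
  intros [sigma Hs] U HU. exists (fun m => sigma (history U m)). exact (Hs U HU).
Qed.

Lemma strictly_H_bounded_strictly_M_bounded :
  @strictly_H_bounded X I T -> @strictly_M_bounded X I T.
Proof.
  intros [sigma Hs]. exists sigma. intros U HU. destruct (Hs U HU) as [HA HAx].
  split; [exact HA|]. intros x Hx. destruct (HAx x Hx) as [N HN]. exists N. apply HN; lia.
Qed.

Lemma strictly_M_bounded_M_bounded : @strictly_M_bounded X I T -> @M_bounded X I T.
Proof.
  intros [sigma Hs] U HU. exists (fun m => sigma (history U m)). exact (Hs U HU).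
Qed.

Lemma H_bounded_M_bounded : @H_bounded X I T -> @M_bounded X I T.
Proof.
  intros HH U HU. destruct (HH U HU) as [A [HA HAx]]. exists A. split; [exact HA|].
  intros x Hx. destruct (HAx x Hx) as [N HN]. exists N. apply HN; lia.
Qed.

End Games.

Theorem mainTheorem10 :
  (forall (X : Type) (T : topology X) (n : nat), tychonoff T -> (1 <= n)%nat ->
     (@strictly_H_bounded X (fin n) T <-> @H_bounded X (fin n) T) /\
     (@H_bounded X (fin n) T <-> @strictly_M_bounded X (fin n) T) /\
     (@strictly_M_bounded X (fin n) T <-> @M_bounded X (fin n) T) /\
     (@M_bounded X (fin n) T <-> pseudocompact T)) /\
  (forall (X : Type) (T : topology X), tychonoff T -> inhabited X ->
     ~ @H_bounded X nat T).
Proof.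
  split.
  - intros X T n HT Hn.
    pose proof (strictly_H_bounded_H_bounded (I := fin n) T).
    pose proof (strictly_H_bounded_strictly_M_bounded (I := fin n) T).
    pose proof (strictly_M_bounded_M_bounded (I := fin n) T).
    pose proof (H_bounded_M_bounded (I := fin n) T).
    pose proof (M_bounded_pseudocompact T (exist _ 0%nat Hn : fin n)).
    pose proof (fun Hpc => strictly_H_bounded_of_bounded T HT
                  (pseudocompact_Cp_bounded T n Hpc)).
    tauto.
  - intros X T _ [x0]. exact (not_H_bounded_omega T x0).
Qed.
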